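(* Let $r\ne0$ be an integer, $K$ a field of characteristic not dividing $2r$, and $E_r$ the elliptic curve $y^2=x^3-r^{-1}x$ over $K$, embedded in $\mathbb{P}^2$ as $x^3-rxz^2-ry^2z=0$ (the affine point $(x,y)$ corresponding to $(x:y:r^{-1})$, and $O=(0:1:0)$). Let $Q=(a,b)$ be an affine point of $E_r$ such that the translation $\tau_Q:P\mapsto P+Q$ of $E_r$ is the restriction to $E_r$ of some $\bar\varphi\in\mathrm{PGL}_3(K)$ with $\bar\varphi(E_r)\subseteq E_r$. Then $3r^2a^4-6ra^2-1=0$. *)

From mathcomp Require Import all_boot all_algebra.
Set Implicit Arguments. Unset Strict Implicit. Unset Printing Implicit Defensive.
Import GRing.Theory Num.Theory.
Local Open Scope ring_scope.

(* The curve E_r : y^2 = x^3 - r^{-1} x over a field L (r : int cast into L).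
   Points: None = O (point at infinity), Some (x, y) = affine point. *)
Definition ec_on (L : fieldType) (r : int) (P : option (L * L)) : bool :=
  match P with
  | None => true
  | Some (x, y) => y ^+ 2 == x ^+ 3 - (r%:~R)^-1 * x
  end.

Definition ec_add (L : fieldType) (r : int) (P Q : option (L * L)) :
    option (L * L) :=
  let A : L := - (r%:~R)^-1 in
  match P, Q with
  | None, _ => Q
  | _, None => P
  | Some (x1, y1), Some (x2, y2) =>
      if x1 == x2 then
        if y1 == - y2 then None
        else
          let l := (3%:R * x1 ^+ 2 + A) / (2%:R * y1) in
          let x3 := l ^+ 2 - x1 - x2 in
          Some (x3, l * (x1 - x3) - y1)
      else
        let l := (y2 - y1) / (x2 - x1) in
        let x3 := l ^+ 2 - x1 - x2 in
        Some (x3, l * (x1 - x3) - y1)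
  end.

Definition proj_curve (L : fieldType) (r : int) (v : 'cV[L]_3) : bool :=
  let x := v (inord 0) 0 in let y := v (inord 1) 0 in let z := v (inord 2) 0 in
  x ^+ 3 - r%:~R * x * z ^+ 2 - r%:~R * y ^+ 2 * z == 0.

Definition proj_pt (L : fieldType) (r : int) (P : option (L * L)) : 'cV[L]_3 :=
  match P with
  | None => \col_(i < 3) nth 0 [:: 0; 1; 0] i
  | Some (x, y) => \col_(i < 3) nth 0 [:: x; y; (r%:~R)^-1] i
  end.

Definition map_pt (K L : fieldType) (f : {rmorphism K -> L})
    (P : option (K * K)) : option (L * L) :=
  omap (fun q => (f q.1, f q.2)) P.

(* As E_r is a curve (variety), both conditions are
   required on L-points for every field extension f : K -> L. *)
Definition translation_from_PGL3 (K : fieldType) (r : int)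
    (Q : option (K * K)) : Prop :=
  exists M : 'M[K]_3, M \in unitmx /\
    forall (L : fieldType) (f : {rmorphism K -> L}),
      (forall v : 'cV[L]_3, v != 0 -> proj_curve r v ->
          proj_curve r (map_mx f M *m v)) /\
      (forall P : option (L * L), ec_on r P ->
          exists c : L, c != 0 /\
            map_mx f M *m proj_pt r P = c *: proj_pt r (ec_add r P (map_pt f Q))).

(* In the coordinates (x : y : 1/r) the points P = (x, y) and -P = (x, -y)
   differ by 2y times O = (0 : 1 : 0), and tau_Q maps O to Q.  So if a matrix
   M induces tau_Q, then M P - M (-P) = 2y c Q, i.e. a combination of the
   points P + Q and -P + Q is a nonzero multiple of Q.  Comparing the first
   and last coordinates forces x(P + Q) = x(Q) = a whenever -P + Q is O or
   has the same abscissa as P + Q.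
   If b <> 0, take P = Q: then -Q + Q = O and x(2Q) = a, which by the tangent
   formula is exactly 3 r^2 a^4 - 6 r a^2 - 1 = 0.  If b = 0, Q has order 2,
   so -P + Q = -(P + Q) and x(P + Q) = a for every P with y <> 0; this fails
   for a generic point P = (t, sqrt (t^3 - t/r)) over an extension of K(t). *)

From mathcomp Require Import all_boot all_algebra all_field.
From mathcomp Require Import ring.
From Stdlib Require Import Classical.
Set Implicit Arguments. Unset Strict Implicit. Unset Printing Implicit Defensive.
Import GRing.Theory.
Local Open Scope ring_scope.

Definition ec_neg (L : fieldType) (P : option (L * L)) : option (L * L) :=
  omap (fun p => (p.1, - p.2)) P.

Section Translation.

Variables (L : fieldType) (r : int).
Local Notation ri := ((r%:~R : L)^-1).

Definition translation_by_matrix (M : 'M[L]_3) (Q : option (L * L)) : Prop :=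
  forall P : option (L * L), ec_on r P ->
    exists c : L, c != 0 /\ M *m proj_pt r P = c *: proj_pt r (ec_add r P Q).

Lemma ec_add_neg_two_torsion (P : option (L * L)) (a : L) :
  ec_add r (ec_neg P) (Some (a, 0)) = ec_neg (ec_add r P (Some (a, 0))).
Proof.
case: P => [[x y]|] /=; last by rewrite oppr0.
rewrite oppr0 oppr_eq0; case: eqVneq => _; last first.
  by rewrite !sub0r opprK mulNr sqrrN /=; congr (Some (_, _)); ring.
case: eqVneq => // _.
by rewrite mulrN invrN mulrN sqrrN /=; congr (Some (_, _)); ring.
Qed.

Lemma proj_pt_neg (x y : L) :
  proj_pt r (Some (x, - y)) = proj_pt r (Some (x, y)) - (2 * y) *: proj_pt r None.
Proof.
apply/matrixP => i j; rewrite !mxE.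
by case: i => [[|[|[|i]]] Hi] //=; rewrite ?mulr0 ?subr0 // mulr1; ring.
Qed.

Lemma proj_pt_ec_neg (P : option (L * L)) :
  exists e : L, proj_pt r (ec_neg P) = proj_pt r P + e *: proj_pt r None.
Proof.
case: P => [[x y]|]; last by exists 0; rewrite scale0r addr0.
by exists (- (2 * y)); rewrite [LHS]proj_pt_neg scaleNr.
Qed.

Lemma translation_vertical_pair (M : 'M[L]_3) (Q : option (L * L)) (x y : L) :
  translation_by_matrix M Q -> ec_on r (Some (x, y)) ->
  exists c1 c2 c3 : L, c3 != 0 /\
    c1 *: proj_pt r (ec_add r (Some (x, y)) Q)
      - c2 *: proj_pt r (ec_add r (Some (x, - y)) Q)
    = (2 * y * c3) *: proj_pt r Q.
Proof.
move=> trM Pon; have Pon' : ec_on r (Some (x, - y)) by rewrite /= sqrrN.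
have [c1 [_ E1]] := trM _ Pon; have [c2 [_ E2]] := trM _ Pon'.
have [c3 [c3_neq0 E3]] := trM None isT.
exists c1, c2, c3; split=> //.
by rewrite -E1 -E2 -mulmxBr proj_pt_neg opprB addrC subrK -scalemxAr E3 scalerA.
Qed.

Hypothesis r_neq0 : (r%:~R : L) != 0.
Hypothesis two_neq0 : (2%:R : L) != 0.

Lemma proj_pt_comb_fst (R : option (L * L)) (a b c d e : L) : d != 0 ->
  c *: proj_pt r R + e *: proj_pt r None = d *: proj_pt r (Some (a, b)) ->
  omap fst R = Some a.
Proof.
move=> d_neq0 /matrixP E; have Ex := E ord0 0; have Ez := E (inord 2) 0.
move: Ex Ez; rewrite !mxE /= !inordK //=.
have ri_neq0 : ri != 0 by rewrite invr_neq0.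
case: R {E} => [[x y]|] /=; rewrite !mxE /= ?inordK //= !mulr0 ?addr0.
  move=> Ex /(mulIf ri_neq0) cd.
  by rewrite cd in Ex; rewrite (mulfI d_neq0 Ex).
by move=> _ /esym/eqP; rewrite mulf_eq0 (negbTE d_neq0) (negbTE ri_neq0).
Qed.

Lemma translation_doubling_fst (M : 'M[L]_3) (a b : L) :
  translation_by_matrix M (Some (a, b)) -> ec_on r (Some (a, b)) -> b != 0 ->
  omap fst (ec_add r (Some (a, b)) (Some (a, b))) = Some a.
Proof.
move=> trM Qon b_neq0.
have [c1 [c2 [c3 [c3_neq0 V]]]] := translation_vertical_pair trM Qon.
move: V; rewrite [ec_add r (Some (a, - b)) _]/= !eqxx => V.
apply: (@proj_pt_comb_fst _ a b c1 (2 * b * c3) (- c2)).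
  by rewrite !mulf_neq0.
by rewrite scaleNr.
Qed.

Lemma translation_two_torsion_fst (M : 'M[L]_3) (a x y : L) :
  translation_by_matrix M (Some (a, 0)) -> ec_on r (Some (x, y)) -> y != 0 ->
  omap fst (ec_add r (Some (x, y)) (Some (a, 0))) = Some a.
Proof.
move=> trM Pon y_neq0.
have [c1 [c2 [c3 [c3_neq0 V]]]] := translation_vertical_pair trM Pon.
move: V; rewrite -[Some (x, - y)]/(ec_neg (Some (x, y))) ec_add_neg_two_torsion.
have [e ->] := proj_pt_ec_neg (ec_add r (Some (x, y)) (Some (a, 0))) => V.
apply: (@proj_pt_comb_fst _ a 0 (c1 - c2) (2 * y * c3) (- (c2 * e))).
  by rewrite !mulf_neq0.
by rewrite -V scalerBl scalerDr scalerA scaleNr opprD addrA.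
Qed.

Lemma ec_double_fst_fixed_eq (a b : L) : ec_on r (Some (a, b)) -> b != 0 ->
  omap fst (ec_add r (Some (a, b)) (Some (a, b))) = Some a ->
  3%:R * (r%:~R) ^+ 2 * a ^+ 4 - 6%:R * r%:~R * a ^+ 2 - 1 = 0 :> L.
Proof.
move=> /eqP Qon b_neq0.
have b_neq_opp : (b == - b) = false.
  apply/negbTE; rewrite -subr_eq0 opprK -mulr2n -mulr_natl.
  by rewrite mulf_neq0.
rewrite /= eqxx b_neq_opp => -[].
set l := _ / _ => x2Q.
have l2 : l ^+ 2 = 3%:R * a by move/eqP: x2Q; rewrite !subr_eq => /eqP ->; ring.
have l_tangent : l * (2%:R * b) = 3%:R * a ^+ 2 - ri.
  by rewrite /l divfK ?mulf_neq0.
have : (3%:R * a ^+ 2 - ri) ^+ 2 = 12%:R * a * (a ^+ 3 - ri * a).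
  by rewrite -l_tangent -Qon exprMn l2; ring.
move/eqP; rewrite -subr_eq0 => /eqP E.
by rewrite -[RHS](mulr0 (- r%:~R ^+ 2)) -E; field.
Qed.

Lemma ec_add_two_torsion_fst_neq (a x y : L) :
  ec_on r (Some (a, 0)) -> ec_on r (Some (x, y)) -> x != a ->
  omap fst (ec_add r (Some (x, y)) (Some (a, 0))) != Some a.
Proof.
move=> /eqP; rewrite expr0n /= => /esym Qon /eqP Pon x_neq_a.
rewrite /= (negbTE x_neq_a) sub0r; apply/eqP => -[]; set l := _ / _ => xPQ.
have ax_neq0 : a - x != 0 by rewrite subr_eq0 eq_sym.
have Py2 : y ^+ 2 = (x + 2%:R * a) * (a - x) ^+ 2.
  have l2 : l ^+ 2 = x + 2%:R * a.
    by move/eqP: xPQ; rewrite !subr_eq => /eqP ->; ring.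
  by rewrite -l2 /l mulNr sqrrN expr_div_n divfK ?expf_neq0.
have lin : x * (3%:R * a ^+ 2 - ri) - 2%:R * ri * a = 0.
  transitivity (x ^+ 3 - ri * x - (x + 2%:R * a) * (a - x) ^+ 2
                + 2%:R * (a ^+ 3 - ri * a)); first by ring.
  by rewrite -Pon -Py2 Qon subrr mulr0 addr0.
have : 2%:R * ri * a * (x - a) = 0.
  transitivity (a * (x * (3%:R * a ^+ 2 - ri) - 2%:R * ri * a)
                - 3%:R * x * (a ^+ 3 - ri * a)); first by ring.
  by rewrite lin Qon !mulr0 subr0.
have ri_neq0 : ri != 0 by rewrite invr_neq0.
move/eqP; rewrite !mulf_eq0 subr_eq0 (negbTE two_neq0) (negbTE ri_neq0).
rewrite (negbTE x_neq_a) orbF /= => /eqP a0.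
move: lin x_neq_a; rewrite a0 expr0n /= !mulr0 subr0 sub0r mulrN => /eqP.
by rewrite oppr_eq0 mulf_eq0 (negbTE ri_neq0) orbF => ->.
Qed.

End Translation.

Lemma exists_sqrt_extension (F : fieldType) (g : F) :
  exists (L : fieldType) (f : {rmorphism F -> L}) (s : L), s ^+ 2 = f g.
Proof.
have [[s sg] | no_sqrt] := classic (exists s : F, s ^+ 2 = g).
  by exists F, idfun, s.
pose h : {poly F} := 'X^2 - g%:P.
have size_h : size h = 3 by rewrite size_XnsubC.
have h_mi : monic_irreducible_poly h.
  split; last by rewrite monicXnsubC.
  apply: cubic_irreducible => [|x]; first by rewrite size_h.
  apply/negP => /rootP; rewrite !hornerE => /eqP; rewrite subr_eq0 => /eqP x2.
  by apply: no_sqrt; exists x.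
exists {poly %/ h with h_mi}, (qpolyC h), 'qX.
have h0 : in_qpoly h h = 0.
  by apply: val_inj; rewrite /= (mk_monicE h_mi) Pdiv.RingMonic.rmodpp ?h_mi.2.
have gC : in_qpoly h g%:P = qpolyC h g.
  apply: val_inj; apply: in_qpoly_small.
  by rewrite (mk_monicE h_mi) size_h size_polyC; case: eqP.
by rewrite expr2 -in_qpolyM -expr2 -[_ ^+ 2](subrK g%:P) in_qpolyD h0 add0r gC.
Qed.

Lemma ec_on_map (K L : fieldType) (f : {rmorphism K -> L}) (r : int)
    (P : option (K * K)) :
  ec_on r P -> ec_on r (map_pt f P).
Proof.
case: P => [[x y] /eqP Pon|] //; apply/eqP.
by rewrite /= -(rmorph_int f) -fmorphV -!rmorphXn -rmorphM -rmorphB Pon.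
Qed.

Lemma exists_generic_point (K : fieldType) (r : int) (a : K) :
  exists (L : fieldType) (f : {rmorphism K -> L}) (x y : L),
    [/\ ec_on r (Some (x, y)), y != 0 & x != f a].
Proof.
pose iota : {rmorphism K -> {fraction {poly K}}} := @tofrac _ \o polyC.
pose t := tofrac ('X : {poly K}).
have t_transcendental n c : t ^+ n.+1 != iota c.
  rewrite -rmorphXn tofrac_eq; apply/eqP => /(congr1 (size : {poly K} -> nat)).
  by rewrite size_polyXn; have := size_polyC_leq1 c; case: size => [|[]].
pose g := t ^+ 3 - (r%:~R)^-1 * t.
have g_neq0 : g != 0.
  have -> : g = t * (t ^+ 2 - iota (r%:~R)^-1).
    by rewrite fmorphV rmorph_int /g; ring.
  rewrite mulf_neq0 ?subr_eq0 ?t_transcendental //.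
  by rewrite -[t]expr1 -(rmorph0 iota) t_transcendental.
have [L [f [s sg]]] := exists_sqrt_extension g.
exists L, (f \o iota), (f t), s; split.
- by apply/eqP; rewrite sg /g rmorphB rmorphXn rmorphM fmorphV rmorph_int.
- by apply: contra g_neq0; rewrite -(fmorph_eq0 f) -sg => /eqP ->; rewrite expr0n.
- by rewrite /= (inj_eq (fmorph_inj f)) -[t]expr1 t_transcendental.
Qed.

Theorem lemma3p6 (K : fieldType) (r : int) (a b : K)
  (hr : r != 0) (hchar : (2 * r)%:~R != 0 :> K)
  (hQ : ec_on r (Some (a, b)))
  (htr : translation_from_PGL3 r (Some (a, b))) :
  3%:R * (r%:~R) ^+ 2 * a ^+ 4 - 6%:R * r%:~R * a ^+ 2 - 1 = 0 :> K.
Proof.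
have [two_neq0 r_neq0] : (2%:R : K) != 0 /\ (r%:~R : K) != 0.
  by move: hchar; rewrite intrM mulf_eq0 negb_or => /andP[].
have [M [_ trM]] := htr.
have [b0 | b_neq0] := eqVneq b 0; last first.
  have trQ : translation_by_matrix r (map_mx idfun M) (Some (a, b)).
    exact: (trM K idfun).2.
  apply: (ec_double_fst_fixed_eq r_neq0 two_neq0 hQ b_neq0).
  exact (translation_doubling_fst r_neq0 two_neq0 trQ hQ b_neq0).
subst b; have [L [f [x [y [Pon y_neq0 x_neq_fa]]]]] := exists_generic_point r a.
have fr_neq0 : (r%:~R : L) != 0 by rewrite -(rmorph_int f) fmorph_eq0.
have f2_neq0 : (2%:R : L) != 0 by rewrite -(rmorph_nat f) fmorph_eq0.
have := ec_on_map f hQ; have := (trM L f).2; rewrite [map_pt _ _]/= rmorph0.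
move=> trQ Qon; have := ec_add_two_torsion_fst_neq fr_neq0 f2_neq0 Qon Pon x_neq_fa.
by rewrite (translation_two_torsion_fst fr_neq0 f2_neq0 trQ Pon y_neq0) eqxx.
Qed.
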